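(* Let $k\ge 1$ and let $H$ be a connected $k$-regular $k$-edge-colorable graph with no loops or semi-edges (multiple ordinary edges allowed). Then there exists a connected simple $k$-regular $k$-edge-colorable graph $G$ and a vertex $u\in V(G)$ such that for every vertex $x\in V(H)$ and every bijection $\sigma:E_G(u)\to E_H(x)$ there exists a covering projection from $G$ to $H$ that maps $u$ to $x$ and agrees with $\sigma$ on $E_G(u)$.
   Context: $E_G(u)$ denotes the set of edges of $G$ incident with $u$. A graph is simple if it has no loops, no semi-edges and no multiple edges. A covering projection between graphs without loops and semi-edges is a map sending vertices to vertices and edges to edges, preserving incidences, such that for every edge $xy$ of the target its preimage is a perfect matching between the preimages of $x$ and $y$ (equivalently, it restricts to a bijection from $E_G(v)$ onto $E_H(f(v))$ for every vertex $v$). *)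

From mathcomp Require Import all_boot.
Set Implicit Arguments. Unset Strict Implicit. Unset Printing Implicit Defensive.

(* A finite multigraph: every edge has two (distinct) end-vertices; multiple
   edges are allowed, loops and semi-edges are not. The orientation
   (end1/end2) is irrelevant for all notions below. *)
Record mgraph := MGraph {
  vert : finType;
  edge : finType;
  end1 : edge -> vert;
  end2 : edge -> vert;
  noloop : forall e, end1 e != end2 e }.

Section Defs.
Variable G : mgraph.

Definition ends (e : edge G) : {set vert G} := [set end1 e; end2 e].

Definition inc_edges (v : vert G) : {set edge G} := [set e | v \in ends e].

Definition adj : rel (vert G) :=
  fun u v => [exists e : edge G, (end1 e == u) && (end2 e == v)
                              || (end1 e == v) && (end2 e == u)].

Definition connected_graph : Prop := forall u v : vert G, connect adj u v.

Definition regular (k : nat) : Prop := forall v : vert G, #|inc_edges v| = k.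

Definition simple_graph : Prop := forall e f : edge G, ends e = ends f -> e = f.

Definition edge_colorable (k : nat) : Prop :=
  exists c : edge G -> 'I_k, forall e f : edge G,
    e != f -> ~~ [disjoint ends e & ends f] -> c e != c f.
End Defs.

Definition covering (G H : mgraph) (fV : vert G -> vert H)
  (fE : edge G -> edge H) : Prop :=
  (forall e : edge G, [set fV (end1 e); fV (end2 e)] = ends (fE e)) /\
  (forall v : vert G, {in inc_edges v &, injective fE} /\
                      fE @: inc_edges v = inc_edges (fV v)).

(* Fix a proper k-edge-colouring c of H. Each colour class is a perfect
   matching of H, i.e. a fixed-point-free involution m_j of V(H). Let the k
   involutions act simultaneously on every copy of V(H) indexed by a pair
   (pi, y), the copy (pi, y) moving by m_(pi i) under the i-th generator, and
   take G to be the orbit graph of the base point (y)_(pi, y), tagged with a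
   hypercube coordinate so that no generator fixes a vertex and distinct
   generators never reach the same vertex; G is then simple, connected,
   k-regular and properly coloured by the generator index. Given x and
   sigma, read off the colour relabelling pi, and project every vertex of G
   to its (pi, x)-coordinate: this intertwines generator i with m_(pi i),
   which is exactly a covering projection extending sigma. *)
From mathcomp Require Import all_boot.
Set Implicit Arguments. Unset Strict Implicit. Unset Printing Implicit Defensive.

Section ColourMatchings.
Variables (k : nat) (H : mgraph) (c : edge H -> 'I_k).
Hypothesis H_reg : regular H k.
Hypothesis c_proper : forall e f : edge H,
  e != f -> ~~ [disjoint ends e & ends f] -> c e != c f.

Definition opp_end (e : edge H) (y : vert H) : vert H :=
  if end1 e == y then end2 e else end1 e.

Definition col_edge (y : vert H) (j : 'I_k) : option (edge H) :=
  [pick e in inc_edges y | c e == j].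

Definition col_step (j : 'I_k) (y : vert H) : vert H :=
  if col_edge y j is Some e then opp_end e y else y.

Lemma inc_edgesE (y : vert H) (e : edge H) : (e \in inc_edges y) = (y \in ends e).
Proof. by rewrite inE. Qed.

Lemma col_inj (y : vert H) : {in inc_edges y &, injective c}.
Proof.
move=> e f ye yf ce_cf; case: (eqVneq e f) => // neq_ef.
have meet_ef : ~~ [disjoint ends e & ends f].
  apply/negP; rewrite disjoint_subset => /subsetP /(_ y).
  by rewrite !inc_edgesE in ye yf; rewrite ye inE yf => /(_ isT).
by move: (c_proper neq_ef meet_ef); rewrite ce_cf eqxx.
Qed.

Lemma col_onto (y : vert H) : [set c e | e in inc_edges y] = [set: 'I_k].
Proof.
apply/eqP; rewrite eqEcard subsetT cardsT card_ord card_in_imset ?H_reg ?leqnn //.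
exact: col_inj.
Qed.

Lemma col_edgeP (y : vert H) (j : 'I_k) :
  exists e, [/\ col_edge y j = Some e, e \in inc_edges y & c e = j].
Proof.
rewrite /col_edge; case: pickP => [e /andP[ye /eqP <-] | none]; first by exists e.
have : j \in [set c e | e in inc_edges y] by rewrite col_onto inE.
by case/imsetP => e ye je; move: (none e); rewrite ye je eqxx.
Qed.

Lemma col_edge_inc (y : vert H) (e : edge H) :
  e \in inc_edges y -> col_edge y (c e) = Some e.
Proof.
move=> ye; have [f [-> yf cf]] := col_edgeP y (c e).
by rewrite (col_inj yf ye cf).
Qed.

Lemma ends_opp (e : edge H) (y : vert H) : y \in ends e -> ends e = [set y; opp_end e y].
Proof.
rewrite /ends /opp_end; case: (eqVneq (end1 e) y) => [<- //|ne].
by rewrite !inE eq_sym (negPf ne) => /eqP ->; apply: setUC.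
Qed.

Lemma opp_end_in (e : edge H) (y : vert H) : y \in ends e -> opp_end e y \in ends e.
Proof. by move=> ye; rewrite (ends_opp ye) !inE eqxx orbT. Qed.

Lemma opp_endK (e : edge H) (y : vert H) : y \in ends e -> opp_end e (opp_end e y) = y.
Proof.
rewrite /opp_end; case: (eqVneq (end1 e) y) => [<-|ne]; first by rewrite (negPf (noloop e)).
by rewrite eqxx; rewrite !inE eq_sym (negPf ne) => /eqP.
Qed.

Lemma col_step_edge (y : vert H) (j : 'I_k) (e : edge H) :
  col_edge y j = Some e -> col_step j y = opp_end e y.
Proof. by rewrite /col_step => ->. Qed.

Lemma col_edge_step (y : vert H) (j : 'I_k) : col_edge (col_step j y) j = col_edge y j.
Proof.
have [e [ye_j ye ce]] := col_edgeP y j.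
rewrite (col_step_edge ye_j) ye_j -ce; apply: col_edge_inc.
by rewrite inc_edgesE opp_end_in // -inc_edgesE.
Qed.

Lemma col_stepK (j : 'I_k) : involutive (col_step j).
Proof.
move=> y; have [e [ye_j ye _]] := col_edgeP y j.
have ye'_j : col_edge (col_step j y) j = Some e by rewrite col_edge_step.
by rewrite (col_step_edge ye'_j) (col_step_edge ye_j) opp_endK // -inc_edgesE.
Qed.

Lemma ends_col_edge (y : vert H) (j : 'I_k) (e : edge H) :
  col_edge y j = Some e -> ends e = [set y; col_step j y].
Proof.
move=> ye_j; rewrite (col_step_edge ye_j); apply: ends_opp.
have [f [yf_j yf _]] := col_edgeP y j.
by move: yf_j; rewrite ye_j => -[->]; rewrite -inc_edgesE.
Qed.

End ColourMatchings.

Section InvolutionGraph.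
Variables (k : nat) (T : finType) (t : 'I_k -> T -> T) (t0 : T).

Definition flip (b : {ffun 'I_k -> bool}) (i : 'I_k) : {ffun 'I_k -> bool} :=
  [ffun j => if j == i then ~~ b j else b j].

Definition inv_state := ({ffun 'I_k -> bool} * T)%type.

Definition inv_move (i : 'I_k) (s : inv_state) : inv_state := (flip s.1 i, t i s.2).

Definition inv_move_rel : rel inv_state := fun s s' => [exists i, s' == inv_move i s].

Definition inv_root_state : inv_state := ([ffun _ => false], t0).

Definition inv_vert := {s : inv_state | connect inv_move_rel inv_root_state s}.

Lemma connect_move (i : 'I_k) (s : inv_state) :
  connect inv_move_rel inv_root_state s -> connect inv_move_rel inv_root_state (inv_move i s).
Proof. by move=> root_s; apply: connect_trans root_s (connect1 _); apply/existsP; exists i. Qed.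

Definition step (i : 'I_k) (v : inv_vert) : inv_vert :=
  exist _ (inv_move i (val v)) (connect_move i (valP v)).

Definition bit (v : inv_vert) : 'I_k -> bool := (val v).1.

Lemma bit_step_eq (i : 'I_k) (v : inv_vert) : bit (step i v) i = ~~ bit v i.
Proof. by rewrite /bit /= ffunE eqxx. Qed.

Lemma bit_step_neq (i j : 'I_k) (v : inv_vert) : j != i -> bit (step i v) j = bit v j.
Proof. by rewrite /bit /= ffunE => /negPf ->. Qed.

Lemma step_neq (i : 'I_k) (v : inv_vert) : step i v != v.
Proof. by apply/eqP => /(congr1 (bit^~ i)); rewrite bit_step_eq; case: (bit v i). Qed.

(* The edge of colour i between v and step i v is stored at its endpoint
   whose i-th bit is false, so that each edge has exactly one name. *)
Definition inv_edge := {p : inv_vert * 'I_k | ~~ bit p.1 p.2}.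

Definition inv_end1 (e : inv_edge) : inv_vert := (val e).1.
Definition inv_end2 (e : inv_edge) : inv_vert := step (val e).2 (val e).1.

Lemma inv_noloop (e : inv_edge) : inv_end1 e != inv_end2 e.
Proof. by rewrite eq_sym step_neq. Qed.

Definition inv_graph : mgraph := MGraph inv_noloop.

Definition inv_root : inv_vert := exist _ inv_root_state (connect0 _ _).

Definition edge_colour (e : edge inv_graph) : 'I_k := (val e).2.

Lemma edge_atP (v : inv_vert) (i : 'I_k) : ~~ bit (if bit v i then step i v else v) i.
Proof. by case vi: (bit v i); rewrite ?bit_step_eq vi. Qed.

Definition edge_at (v : vert inv_graph) (i : 'I_k) : edge inv_graph :=
  exist _ (if bit v i then step i v else v, i) (edge_atP v i).

Lemma edge_colour_at (v : vert inv_graph) (i : 'I_k) : edge_colour (edge_at v i) = i.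
Proof. by []. Qed.

Lemma edge_at_inj (v : vert inv_graph) : injective (edge_at v).
Proof. by move=> i j /(congr1 edge_colour). Qed.

Lemma end1_edge_at (v : vert inv_graph) (i : 'I_k) :
  end1 (edge_at v i) = if bit v i then step i v else v.
Proof. by []. Qed.

Section Involutive.
Hypothesis tK : forall i, involutive (t i).

Lemma stepK (i : 'I_k) : involutive (step i).
Proof.
move=> v; apply: val_inj; case: v => [[b a] _] /=; congr pair; last exact: tK.
by apply/ffunP => j; rewrite !ffunE; case: eqVneq => [->|]; rewrite ?negbK.
Qed.

Lemma inc_edge_at (v : vert inv_graph) (e : edge inv_graph) :
  (e \in inc_edges v) = (e == edge_at v (edge_colour e)).
Proof.
case: e => [[w i] /= wi]; rewrite inE /ends !inE /edge_colour /=.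
apply/idP/eqP => [|/(congr1 val) [wv]].
  by case/orP => /eqP ->; apply: val_inj; rewrite /= ?bit_step_eq (negPf wi) ?stepK.
change ((v == w) || (v == step i w)); rewrite wv.
by case: (bit v i); rewrite ?stepK eqxx ?orbT.
Qed.

Lemma edge_at_inc (v : vert inv_graph) (i : 'I_k) : edge_at v i \in inc_edges v.
Proof. by rewrite inc_edge_at. Qed.

Lemma inc_edges_at (v : vert inv_graph) : inc_edges v = [set edge_at v i | i : 'I_k].
Proof.
apply/setP => e; apply/idP/imsetP => [|[i _ ->]]; last exact: edge_at_inc.
by rewrite inc_edge_at => /eqP ->; exists (edge_colour e).
Qed.

Lemma inv_graph_regular : regular inv_graph k.
Proof. by move=> v; rewrite inc_edges_at card_imset ?card_ord //; apply: edge_at_inj. Qed.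

Lemma inv_graph_colorable : edge_colorable inv_graph k.
Proof.
exists edge_colour => e f neq_ef; apply: contraNneq => ce_cf.
rewrite disjoint_subset; apply/subsetP => v ve; rewrite inE; apply/negP => vf.
have : e \in inc_edges v by rewrite inE.
have : f \in inc_edges v by rewrite inE.
by rewrite !inc_edge_at ce_cf => /eqP <- /eqP ef; rewrite ef eqxx in neq_ef.
Qed.

(* Two edges with the same ends have the same colour: an edge of colour i
   changes only the i-th bit. *)
Lemma edge_colour_ends (e f : edge inv_graph) : ends e = ends f -> edge_colour e = edge_colour f.
Proof.
case: e f => [[a i] ai] [[b j] bj]; rewrite /edge_colour /= => ends_ef.
change ([set a; step i a] = [set b; step j b]) in ends_ef.
apply/eqP; apply: contraT => nij.
have : a \in [set b; step j b] by rewrite -ends_ef !inE eqxx.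
have : step i a \in [set b; step j b] by rewrite -ends_ef !inE eqxx orbT.
rewrite !inE => ia_ends /orP[] /eqP a_def; move: ia_ends; rewrite a_def;
  rewrite (negPf (step_neq _ _)) ?orbF /= => /eqP.
  by move/(congr1 (bit^~ i)); rewrite bit_step_eq bit_step_neq //; case: (bit b i).
by move/(congr1 (bit^~ i)); rewrite bit_step_eq !bit_step_neq //; case: (bit b i).
Qed.

Lemma inv_graph_simple : simple_graph inv_graph.
Proof.
move=> e f ends_ef.
have : f \in inc_edges (end1 e) by rewrite inE -ends_ef !inE eqxx.
have : e \in inc_edges (end1 e) by rewrite inE /ends !inE eqxx.
rewrite !inc_edge_at => /eqP e_at /eqP f_at.
by rewrite [RHS]f_at -(edge_colour_ends ends_ef) -e_at.
Qed.

Lemma adj_step (v : vert inv_graph) (i : 'I_k) : adj v (step i v).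
Proof.
apply/existsP; exists (edge_at v i); rewrite /= /inv_end1 /inv_end2 /=.
by case: (bit v i); rewrite ?stepK !eqxx ?orbT.
Qed.

Lemma adj_sym : symmetric (@adj inv_graph).
Proof. by move=> a b; apply/existsP/existsP => -[e ab]; exists e; rewrite orbC. Qed.

Lemma connect_path (w v : vert inv_graph) (p : seq inv_state) :
  path inv_move_rel (val w) p -> val v = last (val w) p -> connect (@adj inv_graph) w v.
Proof.
elim: p w => [|s p IHp] w /=; first by move=> _ /val_inj ->.
case/andP => /existsP[i /eqP s_def] p_path v_last.
apply: connect_trans (connect1 (adj_step w i)) (IHp (step i w) _ _) => /=; by rewrite -s_def.
Qed.

Lemma connect_root (v : vert inv_graph) : connect (@adj inv_graph) inv_root v.
Proof. by case/connectP: (valP v) => p; apply: (@connect_path inv_root). Qed.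

Lemma inv_graph_connected : connected_graph inv_graph.
Proof.
move=> a b; apply: connect_trans (connect_root b).
by rewrite (sym_connect_sym adj_sym) connect_root.
Qed.

End Involutive.
End InvolutionGraph.

Section Covering.
Variables (k : nat) (H : mgraph) (c : edge H -> 'I_k).
Hypothesis H_reg : regular H k.
Hypothesis c_proper : forall e f : edge H,
  e != f -> ~~ [disjoint ends e & ends f] -> c e != c f.
Variables (T : finType) (t : 'I_k -> T -> T) (t0 : T).
Hypothesis tK : forall i, involutive (t i).
Variables (pi : 'I_k -> 'I_k) (h : T -> vert H).
Hypothesis pi_inj : injective pi.
Hypothesis h_step : forall i a, h (t i a) = col_step c (pi i) (h a).

Definition cov_vert (v : vert (inv_graph t t0)) : vert H := h (val v).2.

(* The default edge [e0] is never used: [col_edge] always succeeds. *)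
Definition cov_edge (e0 : edge H) (e : edge (inv_graph t t0)) : edge H :=
  odflt e0 (col_edge c (cov_vert (end1 e)) (pi (edge_colour e))).

Variable e0 : edge H.

Lemma cov_vert_step (i : 'I_k) (v : vert (inv_graph t t0)) :
  cov_vert (step i v) = col_step c (pi i) (cov_vert v).
Proof. exact: h_step. Qed.

Lemma cov_edge_at (v : vert (inv_graph t t0)) (i : 'I_k) :
  cov_edge e0 (edge_at v i) = odflt e0 (col_edge c (cov_vert v) (pi i)).
Proof.
rewrite /cov_edge end1_edge_at edge_colour_at.
by case: (bit v i); rewrite // cov_vert_step col_edge_step.
Qed.

Lemma cov_edge_inj (v : vert (inv_graph t t0)) : {in inc_edges v &, injective (cov_edge e0)}.
Proof.
move=> e f; rewrite !(inc_edge_at tK) => /eqP -> /eqP ->; rewrite !cov_edge_at.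
have [e' [-> _ ce']] := col_edgeP H_reg c_proper (cov_vert v) (pi (edge_colour e)).
have [f' [-> _ cf']] := col_edgeP H_reg c_proper (cov_vert v) (pi (edge_colour f)).
by move=> /= e'f'; rewrite (@pi_inj (edge_colour e) (edge_colour f)) // -ce' -cf' e'f'.
Qed.

Lemma cov_edge_onto (v : vert (inv_graph t t0)) :
  cov_edge e0 @: inc_edges v = inc_edges (cov_vert v).
Proof.
apply/eqP; rewrite eqEcard card_in_imset; last exact: cov_edge_inj.
rewrite H_reg (inv_graph_regular tK) leqnn andbT.
apply/subsetP => _ /imsetP[e + ->]; rewrite (inc_edge_at tK) => /eqP ->.
rewrite cov_edge_at.
by have [e' [-> ve' _]] := col_edgeP H_reg c_proper (cov_vert v) (pi (edge_colour e)).
Qed.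

Lemma covering_inv_graph : covering cov_vert (cov_edge e0).
Proof.
split=> [e|v]; last by split; [apply: cov_edge_inj | apply: cov_edge_onto].
change ([set cov_vert (end1 e); cov_vert (step (edge_colour e) (end1 e))]
  = ends (cov_edge e0 e)).
rewrite cov_vert_step /cov_edge.
have [e' [ee' _ _]] := col_edgeP H_reg c_proper (cov_vert (end1 e)) (pi (edge_colour e)).
by rewrite ee' /= (ends_col_edge H_reg c_proper ee').
Qed.

End Covering.

Section UniversalAction.
Variables (k : nat) (H : mgraph) (c : edge H -> 'I_k).
Hypothesis H_reg : regular H k.
Hypothesis c_proper : forall e f : edge H,
  e != f -> ~~ [disjoint ends e & ends f] -> c e != c f.

(* One copy of V(H) for each colour relabelling pi and each start vertex y;
   the i-th generator moves the copy (pi, y) along colour pi i. *)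
Definition walk_index := ({ffun 'I_k -> 'I_k} * vert H)%type.

Definition walk_space := {ffun walk_index -> vert H}.

Definition walk_step (i : 'I_k) (g : walk_space) : walk_space :=
  [ffun q : walk_index => col_step c (q.1 i) (g q)].

Definition walk_start : walk_space := [ffun q : walk_index => q.2].

Lemma walk_stepK (i : 'I_k) : involutive (walk_step i).
Proof. by move=> g; apply/ffunP => q; rewrite !ffunE col_stepK. Qed.

Definition walk_graph : mgraph := inv_graph walk_step walk_start.

Definition walk_root : vert walk_graph := inv_root walk_step walk_start.

Variables (x : vert H) (sigma : edge walk_graph -> edge H).
Hypothesis sigma_inj : {in inc_edges walk_root &, injective sigma}.
Hypothesis sigma_onto : sigma @: inc_edges walk_root = inc_edges x.

Definition relabel : {ffun 'I_k -> 'I_k} :=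
  [ffun i => c (sigma (edge_at walk_root i))].

Lemma sigma_edge_at (i : 'I_k) : sigma (edge_at walk_root i) \in inc_edges x.
Proof. by rewrite -sigma_onto imset_f // (edge_at_inc walk_stepK). Qed.

Lemma relabel_inj : injective relabel.
Proof.
move=> i j; rewrite !ffunE => /(col_inj c_proper (sigma_edge_at i) (sigma_edge_at j)).
by move/sigma_inj => /(_ (edge_at_inc walk_stepK _ _) (edge_at_inc walk_stepK _ _))/edge_at_inj.
Qed.

Definition eval_at (g : walk_space) : vert H := g (relabel, x).

Lemma eval_at_step (i : 'I_k) (g : walk_space) :
  eval_at (walk_step i g) = col_step c (relabel i) (eval_at g).
Proof. by rewrite /eval_at ffunE. Qed.

Lemma cov_vert_root : cov_vert eval_at walk_root = x.
Proof. by rewrite /cov_vert /eval_at /= ffunE. Qed.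

Lemma cov_edge_root (e0 : edge H) :
  {in inc_edges walk_root, forall e, cov_edge c relabel eval_at e0 e = sigma e}.
Proof.
move=> e; rewrite (inc_edge_at walk_stepK) => /eqP ->.
rewrite cov_edge_at //; last exact: eval_at_step.
by rewrite cov_vert_root [relabel _]ffunE (col_edge_inc H_reg c_proper (sigma_edge_at _)).
Qed.

End UniversalAction.

Theorem mainTheorem5 (k : nat) (H : mgraph) :
  1 <= k -> connected_graph H -> regular H k -> edge_colorable H k ->
  exists (G : mgraph) (u : vert G),
    [/\ simple_graph G, connected_graph G, regular G k, edge_colorable G k &
    forall (x : vert H) (sigma : edge G -> edge H),
      {in inc_edges u &, injective sigma} ->
      sigma @: inc_edges u = inc_edges x ->
      exists (fV : vert G -> vert H) (fE : edge G -> edge H),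
        [/\ covering fV fE, fV u = x &
            {in inc_edges u, forall e, fE e = sigma e}]].
Proof.
move=> k_gt0 _ H_reg [c c_proper].
have walkK := walk_stepK H_reg c_proper.
exists (walk_graph c), (walk_root c); split.
- exact: inv_graph_simple.
- exact: inv_graph_connected.
- exact: inv_graph_regular.
- exact: inv_graph_colorable.
move=> x sigma sigma_inj sigma_onto.
pose e0 := sigma (edge_at (walk_root c) (Ordinal k_gt0)).
exists (cov_vert (eval_at x sigma)), (cov_edge c (relabel sigma) (eval_at x sigma) e0); split.
- apply: covering_inv_graph => //; last exact: eval_at_step.
  exact: (relabel_inj H_reg c_proper sigma_inj sigma_onto).
- exact: cov_vert_root.
- exact: (cov_edge_root H_reg c_proper sigma_onto e0).
Qed.
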